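(* Let $B$ be a Borel ideal of $S=k[x_1,\dots,x_n]$ and let $m$ be a monomial which is a $p$-socle for $B$. Assume that for every variable $x_q$ dividing $m$, neither $m\frac{x_{q+1}}{x_q}$ (when $q<n$) nor $\frac{m}{x_q}$ is a $p$-socle for $B$. Then $mx_p\in\mathrm{Bgens}(B)$.
   Context: A Borel ideal is a monomial ideal closed under Borel moves $m\mapsto m\frac{x_{i_1}}{x_{j_1}}\cdots\frac{x_{i_s}}{x_{j_s}}$ ($i_t<j_t$, all $x_{j_t}\mid m$). $\mathrm{Bgens}(B)$ is the unique minimal set $T$ of monomials with $B$ equal to the smallest Borel ideal containing $T$. A monomial $m$ is a $p$-socle for $B$ if $\operatorname{Ann}_{S/B}(m)=(B:m)=(x_1,\dots,x_p)$. *)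

(* Monomials of S = k[x_1..x_n] are exponent vectors
   'I_n -> nat; variable x_(i+1) of the paper is index i : 'I_n (0-based).
   A monomial ideal is represented by the set (predicate) of monomials it
   contains; the field k plays no role. *)
From mathcomp Require Import all_boot.
Set Implicit Arguments. Unset Strict Implicit. Unset Printing Implicit Defensive.

Definition monomial (n : nat) := {ffun 'I_n -> nat}.

Definition mmul n (a b : monomial n) : monomial n := [ffun i => a i + b i].

Definition mvar n (i : 'I_n) : monomial n := [ffun k => nat_of_bool (k == i)].

Definition is_mideal n (B : monomial n -> Prop) : Prop :=
  forall a b, B a -> B (mmul a b).

Definition borel_move n (m m' : monomial n) : Prop :=
  exists i j : 'I_n, i < j /\ 0 < m j /\
    m' = [ffun k => m k + (k == i) - (k == j)].

Definition is_borel n (B : monomial n -> Prop) : Prop :=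
  is_mideal B /\ forall m m', B m -> borel_move m m' -> B m'.

Definition borel_closure n (T : monomial n -> Prop) : monomial n -> Prop :=
  fun u => forall I, is_borel I -> (forall t, T t -> I t) -> I u.

Definition same_set n (A B : monomial n -> Prop) : Prop := forall u, A u <-> B u.

Definition is_Bgens n (B T : monomial n -> Prop) : Prop :=
  same_set B (borel_closure T) /\
  forall T', (forall u, T' u -> T u) -> same_set B (borel_closure T') ->
             forall u, T u -> T' u.

(* m is a p-socle for B: (B : m) = (x_1, ..., x_p), p 0-based here *)
Definition is_psocle n (B : monomial n -> Prop) (m : monomial n) (p : 'I_n) : Prop :=
  forall u, B (mmul u m) <-> exists i : 'I_n, i <= p /\ 0 < u i.

Definition shift_up n (m : monomial n) (q : 'I_n) : monomial n :=
  [ffun k : 'I_n => m k + (nat_of_ord k == q.+1) - (k == q)].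

Definition mdivvar n (m : monomial n) (q : 'I_n) : monomial n :=
  [ffun k => m k - (k == q)].

(* Write w ≼ u when u arises from w by multiplications by variables and Borel
   moves.  Each such step strictly increases the weight Σ_k u_k (n - k), so ≼ is
   well founded, the Borel closure of T is its ≼-upward closure, and Bgens(B)
   is the set of ≼-minimal elements of B.  It remains to see that m x_p has no
   immediate predecessor y in B.  The key fact is that a monomial m' one step
   below m with m' x_p ∈ B is itself a p-socle: (B : m') ⊆ (B : m) because
   u m' ≼ u m, and (x_1, ..., x_p) ⊆ (B : m') by Borel moves from m' x_p.  A
   predecessor y = m x_p / x_i (i ≠ p) would make m / x_i such an m', and a
   predecessor y with m x_p = y x_i / x_j (i ≠ p) would make m x_(i+1) / x_i
   one; the cases i = p contradict m ∉ B and (B : m) = (x_1, ..., x_p). *)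
From mathcomp Require Import all_boot zify.
From Stdlib Require Import Classical.
Set Implicit Arguments. Unset Strict Implicit. Unset Printing Implicit Defensive.

(* Pointwise identities between exponent vectors: split on every index
   equality k == i, identify equal indices, and finish with lia. *)
Ltac monomial_lia :=
  rewrite ?ffunE;
  repeat match goal with
  | H : is_true (?a != ?b) |- _ => move/eqP: H => H
  | |- context [?a == ?b] =>
      let E := fresh "E" in
      case: (a =P b) => E;
      [ first [subst a | subst b | move: (congr1 (@nat_of_ord _) E) | idtac]; try congruence
      | try move: (contra_not (@ord_inj _ a b) E) ]
  end; cbn [nat_of_ord nat_of_bool] in *; rewrite /=; lia.

Section Monomials.
Variable n : nat.
Implicit Types (a b u v w y : monomial n) (i j k : 'I_n).

Definition bmove y i j : monomial n := [ffun k => y k + (k == i) - (k == j)].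

Lemma mmulC a b : mmul a b = mmul b a.
Proof. by apply/ffunP => k; monomial_lia. Qed.

Lemma sum_mulvar u i (c : 'I_n -> nat) :
  \sum_k mmul u (mvar i) k * c k = \sum_k u k * c k + c i.
Proof.
rewrite (eq_bigr (fun k => u k * c k + (if k == i then c k else 0))); last first.
  by move=> k _; rewrite !ffunE mulnDl; case: (k == i); rewrite ?mul1n ?mul0n.
by rewrite big_split /= -big_mkcond big_pred1_eq.
Qed.

Definition weight u := \sum_k u k * (n - k).

Lemma weight_mulvar u i : weight (mmul u (mvar i)) = weight u + (n - i).
Proof. exact: sum_mulvar. Qed.

Lemma weight_move u i j : i < j -> 0 < u j -> weight u < weight (bmove u i j).
Proof.
move=> lt_ij u_j.
have E : mmul (bmove u i j) (mvar j) = mmul u (mvar i).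
  by apply/ffunP => k; monomial_lia.
have := congr1 weight E; rewrite !weight_mulvar.
by have := ltn_ord j; lia.
Qed.

Definition borel_step v w := (exists i, w = mmul v (mvar i)) \/ borel_move v w.

Inductive borel_reach u : monomial n -> Prop :=
  | borel_reach_refl : borel_reach u u
  | borel_reach_step v w : borel_reach u v -> borel_step v w -> borel_reach u w.

Lemma borel_reach_trans a b c : borel_reach a b -> borel_reach b c -> borel_reach a c.
Proof. by move=> Rab; elim=> // v w _ Rav Svw; apply: borel_reach_step Rav Svw. Qed.

Lemma borel_reach1 a b : borel_step a b -> borel_reach a b.
Proof. exact: borel_reach_step (borel_reach_refl a). Qed.

Lemma degree_mulvar u i : \sum_k mmul u (mvar i) k = (\sum_k u k).+1.
Proof. by have := sum_mulvar u i (fun=> 1); rewrite !(eq_bigr _ (fun k _ => muln1 _)) addn1. Qed.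

Lemma borel_reach_mmul a b : borel_reach a (mmul a b).
Proof.
have [d] := ubnP (\sum_k b k); elim: d b => // d IH b.
case: (pickP (fun i => 0 < b i)) => [i /= b_i | b0] lt_b_d.
- have Eb : b = mmul (mdivvar b i) (mvar i) by apply/ffunP => k; monomial_lia.
  have -> : mmul a b = mmul (mmul a (mdivvar b i)) (mvar i).
    by rewrite {1}Eb; apply/ffunP => k; monomial_lia.
  apply: borel_reach_step (IH _ _) _; last by left; exists i.
  by move: lt_b_d; rewrite {1}Eb degree_mulvar.
- suff -> : mmul a b = a by apply: borel_reach_refl.
  by apply/ffunP => k; move: (b0 k) => /=; monomial_lia.
Qed.

Lemma borel_step_mull u a b : borel_step a b -> borel_step (mmul u a) (mmul u b).
Proof.
case=> [[i ->] | [i [j [lt_ij [a_j ->]]]]].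
  by left; exists i; apply/ffunP => k; monomial_lia.
right; exists i, j; split=> //; split; first by monomial_lia.
by apply/ffunP => k; monomial_lia.
Qed.

Lemma borel_reach_move y i j : i <= j -> 0 < y j -> borel_reach y (bmove y i j).
Proof.
rewrite leq_eqVlt => /orP[/eqP eq_ij | lt_ij] y_j.
  suff -> : bmove y i j = y by apply: borel_reach_refl.
  by apply/ffunP => k; move: y_j; monomial_lia.
by apply: borel_reach1; right; exists i, j.
Qed.

Lemma borel_reach_inv u v :
  borel_reach u v -> u = v \/ exists2 y, borel_reach u y & borel_step y v.
Proof. by case=> [|y w Ruy Syw]; [left | right; exists y]. Qed.

Lemma weight_reach u v : borel_reach u v -> u = v \/ weight u < weight v.
Proof.
have weight_step a b : borel_step a b -> weight a < weight b.
  case=> [[i ->] | [i [j [lt_ij [a_j ->]]]]]; last exact: weight_move.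
  by rewrite weight_mulvar; have := ltn_ord i; lia.
elim=> [|v' w _ [<- | lt_uv] /weight_step]; [by left | by right | right; lia].
Qed.

Lemma is_borel_step (I : monomial n -> Prop) a b :
  is_borel I -> I a -> borel_step a b -> I b.
Proof. by move=> [idealI moveI] Ia [[i ->] | /(moveI _ _ Ia)]; first exact: idealI. Qed.

Lemma is_borel_reach (I : monomial n -> Prop) a b :
  is_borel I -> I a -> borel_reach a b -> I b.
Proof. by move=> borelI Ia; elim=> // v w _ Iv; apply: is_borel_step. Qed.

Lemma borel_closureP (T : monomial n -> Prop) u :
  borel_closure T u <-> exists2 t, T t & borel_reach t u.
Proof.
split=> [closTu | [t Tt Rtu] I borelI TI]; last exact: is_borel_reach (TI t Tt) Rtu.
apply: (closTu (fun v => exists2 t, T t & borel_reach t v)) => [|t Tt]; last first.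
  by exists t => //; apply: borel_reach_refl.
split=> [a b [t Tt Rta] | a a' [t Tt Rta] move_aa'].
  by exists t => //; apply: borel_reach_trans Rta (borel_reach_mmul a b).
by exists t => //; apply: borel_reach_step Rta _; right.
Qed.

Definition borel_minimal (B : monomial n -> Prop) t :=
  B t /\ forall w, B w -> borel_reach w t -> w = t.

Lemma exists_borel_minimal (B : monomial n -> Prop) u :
  B u -> exists2 t, borel_minimal B t & borel_reach t u.
Proof.
have [d] := ubnP (weight u); elim: d u => // d IH u lt_u_d Bu.
case: (classic (exists w, [/\ B w, borel_reach w u & w <> u])).
  move=> [w [Bw Rwu neq_wu]].
  have [|t Mt Rtw] := IH w _ Bw; last by exists t => //; apply: borel_reach_trans Rwu.
  by case: (weight_reach Rwu) => // lt_wu; lia.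
move=> noPred; exists u; last exact: borel_reach_refl.
by split=> // w Bw Rwu; apply: NNPP => neq_wu; apply: noPred; exists w.
Qed.

Lemma borel_minimal_Bgens (B : monomial n -> Prop) :
  is_borel B -> is_Bgens B (borel_minimal B).
Proof.
move=> borelB; split=> [u | T' sub_T' genT' u [Bu minu]].
  rewrite borel_closureP; split=> [/exists_borel_minimal[t Mt Rtu] | [t [Bt _] Rtu]].
    by exists t.
  exact: is_borel_reach Rtu.
have /borel_closureP[t T't Rtu] := (genT' u).1 Bu.
by have [Bt _] := sub_T' t T't; rewrite -(minu t Bt Rtu).
Qed.

Lemma borel_minimal_generator (B T : monomial n -> Prop) u :
  same_set B (borel_closure T) -> borel_minimal B u -> T u.
Proof.
move=> genT [Bu minu]; have /borel_closureP[t Tt Rtu] := (genT u).1 Bu.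
have Bt : B t by apply/genT/borel_closureP; exists t => //; apply: borel_reach_refl.
by rewrite -(minu t Bt Rtu).
Qed.

End Monomials.

Section PSocle.
Variables (n : nat) (B : monomial n -> Prop) (p : 'I_n).
Hypothesis borelB : is_borel B.
Implicit Types (m u y : monomial n) (i k : 'I_n).

Lemma psocle_mulvarE m k : is_psocle B m p -> B (mmul m (mvar k)) <-> k <= p.
Proof.
move=> socle_m; rewrite mmulC socle_m; split=> [[i [le_ip]] | le_kp].
  by rewrite ffunE; case: eqP => // <- _.
by exists k; rewrite ffunE eqxx.
Qed.

Lemma psocle_notin m : is_psocle B m p -> ~ B m.
Proof.
move=> socle_m Bm; have /socle_m[i [_]] : B (mmul [ffun=> 0] m).
  by have -> : mmul [ffun=> 0] m = m by apply/ffunP => k; monomial_lia.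
by rewrite ffunE.
Qed.

Lemma mulvar_colon m u i : B (mmul m (mvar p)) -> i <= p -> 0 < u i -> B (mmul u m).
Proof.
move=> Bmp le_ip u_i.
have Bmi : B (mmul m (mvar i)).
  suff -> : mmul m (mvar i) = bmove (mmul m (mvar p)) i p.
    apply: (is_borel_reach borelB Bmp); apply: borel_reach_move le_ip _; monomial_lia.
  by apply/ffunP => k; monomial_lia.
have -> : mmul u m = mmul (mmul m (mvar i)) (mdivvar u i).
  by apply/ffunP => k; move: u_i; monomial_lia.
exact: borelB.1.
Qed.

Lemma psocle_step_back m m' : is_psocle B m p -> borel_step m' m ->
  B (mmul m' (mvar p)) -> is_psocle B m' p.
Proof.
move=> socle_m step_m'm Bm'p u; split=> [Bum' | [i [le_ip u_i]]].
  by apply/socle_m; apply: is_borel_step borelB Bum' (borel_step_mull u step_m'm).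
exact: mulvar_colon Bm'p le_ip u_i.
Qed.

Variable m : monomial n.
Hypothesis socle_m : is_psocle B m p.
Hypothesis no_socle_nbr : forall q : 'I_n, 0 < m q ->
  (q.+1 < n -> ~ is_psocle B (shift_up m q) p) /\ ~ is_psocle B (mdivvar m q) p.

Lemma psocle_no_mulvar_pred y i : B y -> mmul m (mvar p) <> mmul y (mvar i).
Proof.
move=> By Emy; have Emy_at k := congr1 (fun f : monomial n => f k) Emy.
case: (eqVneq i p) => [eq_ip | neq_ip].
  apply: (psocle_notin socle_m); suff -> : m = y by [].
  by apply/ffunP => k; move: (Emy_at k); rewrite eq_ip; monomial_lia.
have m_i : 0 < m i by move: (Emy_at i); monomial_lia.
apply: (no_socle_nbr m_i).2; apply: psocle_step_back socle_m _ _.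
  by left; exists i; apply/ffunP => k; move: m_i; monomial_lia.
suff -> : mmul (mdivvar m i) (mvar p) = y by [].
by apply/ffunP => k; move: (Emy_at k) (Emy_at i); monomial_lia.
Qed.

Lemma psocle_no_move_pred y : B y -> ~ borel_move y (mmul m (mvar p)).
Proof.
move=> By [i [j [lt_ij [y_j Emy]]]].
have Emy_at k := congr1 (fun f : monomial n => f k) Emy.
case: (eqVneq i p) => [eq_ip | neq_ip].
  have : B (mmul m (mvar j)).
    suff -> : mmul m (mvar j) = y by [].
    by apply/ffunP => k; move: (Emy_at k) y_j; rewrite -eq_ip; monomial_lia.
  by rewrite (psocle_mulvarE _ socle_m) -eq_ip leqNgt lt_ij.
have m_i : 0 < m i by move: (Emy_at i); monomial_lia.
have lt_i1_n : i.+1 < n := leq_ltn_trans lt_ij (ltn_ord j).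
apply: ((no_socle_nbr m_i).1 lt_i1_n); apply: psocle_step_back socle_m _ _.
  right; exists i, (Ordinal lt_i1_n); split=> //; split; first by monomial_lia.
  by apply/ffunP => k; move: m_i; monomial_lia.
suff -> : mmul (shift_up m i) (mvar p) = bmove y (Ordinal lt_i1_n) j.
  by apply: (is_borel_reach borelB By); apply: borel_reach_move.
by apply/ffunP => k; move: (Emy_at k) (Emy_at i) y_j; monomial_lia.
Qed.

Lemma mulvar_psocle_borel_minimal : borel_minimal B (mmul m (mvar p)).
Proof.
split=> [|w Bw Rw]; first by apply/(psocle_mulvarE _ socle_m).
case: (borel_reach_inv Rw) => [// | [y Rwy [[i Ey] | move_y]]].
  by have := psocle_no_mulvar_pred (is_borel_reach borelB Bw Rwy) Ey.
by have := psocle_no_move_pred (is_borel_reach borelB Bw Rwy) move_y.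
Qed.

End PSocle.

Theorem lemma3p5 (n : nat) (B : monomial n -> Prop) (m : monomial n) (p : 'I_n) :
  is_borel B ->
  is_psocle B m p ->
  (forall q : 'I_n, 0 < m q ->
     (q.+1 < n -> ~ is_psocle B (shift_up m q) p) /\
     ~ is_psocle B (mdivvar m q) p) ->
  (exists T, is_Bgens B T) /\
  (forall T, is_Bgens B T -> T (mmul m (mvar p))).
Proof.
move=> borelB socle_m no_socle_nbr; split.
  by exists (borel_minimal B); apply: borel_minimal_Bgens.
move=> T [genT _]; apply: borel_minimal_generator genT _.
exact: mulvar_psocle_borel_minimal.
Qed.
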